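(* Assume (V1), (V2), (V3), and (In), and let $\delta>0$. Then for every $n$ and all $t,s\ge\delta$, $$\int_0^L|\check\rho^n(t,z)-\check\rho^n(s,z)|\,dz\le R^2\big[C_\delta+(v_{\max}-v(R))\big]|t-s|,$$ where $C_\delta:=3(v_{\max}-v(R))+2(\bar x_{\max}-\bar x_{\min})/\delta$.
   Context: (V1): $v\in C^1([0,\infty))$ strictly decreasing; (V2): $v(0)=v_{\max}\in\mathbb{R}$; (V3): $\rho\mapsto\rho\,v'(\rho)$ is non-increasing on $[0,\infty)$. $\mathcal{M}_L$: nonnegative compactly supported Radon measures on $\mathbb{R}$ of mass $L>0$. (In): $\bar\rho\in\mathcal{M}_L\cap L^\infty(\mathbb{R})$; $R:=\|\bar\rho\|_{L^\infty}$; $[\bar x_{\min},\bar x_{\max}]$ smallest closed interval containing $\mathrm{supp}\,\bar\rho$. For $n\in\mathbb{N}$: $N_n=2^n$, $\ell_n=2^{-n}L$, $\bar x^n_0=\bar x_{\min}$, $\bar x^n_i=\sup\{x:\int_{\bar x^n_{i-1}}^x\bar\rho<\ell_n\}$; $(x^n_i(t))$ solves $\dot x^n_{N_n}=v_{\max}$, $\dot x^n_i=v(\ell_n/(x^n_{i+1}-x^n_i))$, $x^n_i(0)=\bar x^n_i$; $y^n_i:=\ell_n/(x^n_{i+1}-x^n_i)$; $\check\rho^n(t,z):=\sum_{i=0}^{N_n-1}y^n_i(t)\chi_{[i\ell_n,(i+1)\ell_n)}(z)$, $z\in[0,L]$. *)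

From Stdlib Require Import Reals Lra.
Open Scope R_scope.

Definition V1 (v dv : R -> R) : Prop :=
  (forall r, 0 < r -> derivable_pt_lim v r (dv r)) /\
  limit1_in (fun h => (v h - v 0) / h) (fun h => 0 < h) (dv 0) 0 /\
  (forall r, 0 <= r -> limit1_in dv (fun u => 0 <= u) (dv r) r) /\
  (forall a b, 0 <= a -> a < b -> v b < v a).

Definition V2 (v : R -> R) (vmax : R) : Prop := v 0 = vmax.

Definition V3 (dv : R -> R) : Prop :=
  forall a b, 0 <= a -> a <= b -> b * dv b <= a * dv a.

(* ---------- initial datum (In) ----------
   The absolutely continuous measure rhobar (density in L^infty) is encoded
   by its cumulative distribution function F x = int_{-oo}^x rhobar. *)

Definition cdf_ML (F : R -> R) (L : R) : Prop :=
  (forall x y, x <= y -> F x <= F y) /\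
  (exists a b, forall x, (x <= a -> F x = 0) /\ (b <= x -> F x = L)).

Definition lip_bound (F : R -> R) (R0 : R) : Prop :=
  forall x y, x <= y -> F y - F x <= R0 * (y - x).

(* R = ||rhobar||_{L^infty}: the least R0 with F y - F x <= R0 (y - x). *)
Definition is_Linf_norm (F : R -> R) (R0 : R) : Prop :=
  lip_bound F R0 /\ (forall R1, lip_bound F R1 -> R0 <= R1).

Definition in_supp (F : R -> R) (x : R) : Prop :=
  forall e, 0 < e -> 0 < F (x + e) - F (x - e).

Definition smallest_interval (F : R -> R) (xmin xmax : R) : Prop :=
  (forall x, in_supp F x -> xmin <= x <= xmax) /\
  (forall a b, (forall x, in_supp F x -> a <= x <= b) ->
     a <= xmin /\ xmax <= b).

Definition Nn (n : nat) : nat := (2 ^ n)%nat.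
Definition elln (L : R) (n : nat) : R := L / 2 ^ n.

Definition initial_points (F : R -> R) (L xmin : R) (n : nat)
  (xbar : nat -> R) : Prop :=
  xbar 0%nat = xmin /\
  forall i, (1 <= i <= Nn n)%nat ->
    is_lub (fun x => F x - F (xbar (i - 1)%nat) < elln L n) (xbar i).

Definition right_cont0 (f : R -> R) : Prop :=
  limit1_in f (fun t => 0 <= t) (f 0) 0.

(* x solves the follow-the-leader system on [0,oo) with datum xbar
   (the density l_n/(x_{i+1}-x_i) must lie in the domain [0,oo) of v,
   i.e. the particles stay strictly ordered). *)
Definition ftl_solution (v : R -> R) (vmax L : R) (n : nat)
  (xbar : nat -> R) (x : nat -> R -> R) : Prop :=
  (forall i, (i <= Nn n)%nat -> x i 0 = xbar i) /\
  (forall i, (i <= Nn n)%nat -> right_cont0 (x i)) /\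
  (forall i t, (i < Nn n)%nat -> 0 <= t -> x i t < x (S i) t) /\
  (forall t, 0 < t -> derivable_pt_lim (x (Nn n)) t vmax) /\
  (forall i t, (i < Nn n)%nat -> 0 < t ->
     derivable_pt_lim (x i) t (v (elln L n / (x (S i) t - x i t)))).

Definition yn (L : R) (n : nat) (x : nat -> R -> R) (i : nat) (t : R) : R :=
  elln L n / (x (S i) t - x i t).

Definition chi (a b z : R) : R :=
  if Rle_dec a z then (if Rlt_dec z b then 1 else 0) else 0.

Fixpoint sum_upto (f : nat -> R) (k : nat) : R :=
  match k with
  | O => 0
  | S k' => sum_upto f k' + f k'
  end.

Definition rho_check (L : R) (n : nat) (x : nat -> R -> R) (t z : R) : R :=
  sum_upto (fun i => yn L n x i t *
              chi (INR i * elln L n) (INR (S i) * elln L n) z) (Nn n).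

(* [rho_check] is constant, equal to [y_i], on cells of length [l_n], so the
   L^1 distance is [sum_i l_n |y_i(t) - y_i(s)|] and it suffices to bound
   [sum_i l_n |y_i'(tau)|] uniformly for [tau >= delta].  Along the follow-the-leader flow
   [y_i' = - y_i z_i], where [z_i = (w_(i+1) - w_i) / (x_(i+1) - x_i)] is the discrete
   velocity gradient.  Two comparison arguments give a maximum principle [y_i <= R] and
   the one-sided Oleinik estimate [z_i <= 1/tau]; the latter rests on (V3), which makes
   [z_k' <= - z_k^2] wherever [z_k] is the largest positive gradient.  Then
   [l_n |y_i z_i| = y_i^2 |Delta w_i| <= R^2 (2 Delta x_i / tau - Delta w_i)] telescopes to
   at most [2 R^2 (x_N - x_0) / tau], and the spread [x_N - x_0] grows at rate at most
   [vmax - v(R)] from [xbar_N - xbar_0 <= xmax - xmin]. *)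

From Stdlib Require Import Reals Lra Lia Classical.
From Coquelicot Require Import Coquelicot.
Open Scope R_scope.

Section FiniteSums.

Implicit Types (f g : nat -> R) (k : nat).

Lemma sum_upto_ext f g k :
  (forall i, (i < k)%nat -> f i = g i) -> sum_upto f k = sum_upto g k.
Proof.
  induction k as [|k IHk]; intros Hfg; simpl; auto.
  rewrite IHk by (intros; apply Hfg; lia). rewrite Hfg by lia. reflexivity.
Qed.

Lemma sum_upto_zero k : sum_upto (fun _ => 0) k = 0.
Proof. induction k; simpl; lra. Qed.

Lemma sum_upto_minus f g k :
  sum_upto (fun i => f i - g i) k = sum_upto f k - sum_upto g k.
Proof. induction k as [|k IHk]; simpl; [lra | rewrite IHk; lra]. Qed.

Lemma sum_upto_scal (c : R) f k : sum_upto (fun i => c * f i) k = c * sum_upto f k.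
Proof. induction k as [|k IHk]; simpl; [lra | rewrite IHk; lra]. Qed.

Lemma sum_upto_le f g k :
  (forall i, (i < k)%nat -> f i <= g i) -> sum_upto f k <= sum_upto g k.
Proof.
  induction k as [|k IHk]; intros Hfg; simpl; [lra|].
  assert (sum_upto f k <= sum_upto g k) by (apply IHk; intros; apply Hfg; lia).
  assert (f k <= g k) by (apply Hfg; lia).
  lra.
Qed.

Lemma sum_upto_telescope f k : sum_upto (fun i => f (S i) - f i) k = f k - f O.
Proof. induction k as [|k IHk]; simpl; [lra | rewrite IHk; lra]. Qed.

Lemma Rabs_sum_upto_le f k : Rabs (sum_upto f k) <= sum_upto (fun i => Rabs (f i)) k.
Proof.
  induction k as [|k IHk]; simpl; [rewrite Rabs_R0; lra|].
  eapply Rle_trans; [apply Rabs_triang | lra].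
Qed.

Lemma sum_upto_single f k j :
  (j < k)%nat -> (forall i, (i < k)%nat -> i <> j -> f i = 0) -> sum_upto f k = f j.
Proof.
  induction k as [|k IHk]; intros Hj Hf; simpl; [lia|].
  destruct (Nat.eq_dec j k) as [->|Hjk].
  - rewrite (sum_upto_ext f (fun _ => 0)), sum_upto_zero by (intros; apply Hf; lia). lra.
  - rewrite IHk, (Hf k) by (lia || intros; apply Hf; lia). lra.
Qed.

Lemma derivable_pt_lim_sum_upto (h h' : nat -> R -> R) k t :
  (forall i, (i < k)%nat -> derivable_pt_lim (h i) t (h' i t)) ->
  derivable_pt_lim (fun u => sum_upto (fun i => h i u) k) t (sum_upto (fun i => h' i t) k).
Proof.
  induction k as [|k IHk]; intros Hh; simpl.
  - apply derivable_pt_lim_const.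
  - apply (derivable_pt_lim_plus (fun u => sum_upto (fun i => h i u) k) (h k)).
    + apply IHk; intros; apply Hh; lia.
    + apply Hh; lia.
Qed.

End FiniteSums.

(* Mean value theorem applied to [sum_i sg_i h_i] with the signs [sg_i] of the
   increments fixed in advance. *)
Lemma sum_upto_abs_increment_le (k : nat) (h h' : nat -> R -> R) (a b K : R) :
  a <= b ->
  (forall i u, (i < k)%nat -> a <= u <= b -> derivable_pt_lim (h i) u (h' i u)) ->
  (forall u, a <= u <= b -> sum_upto (fun i => Rabs (h' i u)) k <= K) ->
  sum_upto (fun i => Rabs (h i b - h i a)) k <= K * (b - a).
Proof.
  intros Hab Hh HK.
  destruct (Req_dec a b) as [<-|Hne].
  { rewrite (sum_upto_ext _ (fun _ => 0)), sum_upto_zero; [lra|].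
    intros; rewrite Rminus_diag, Rabs_R0; reflexivity. }
  set (sg i := if Rle_dec (h i a) (h i b) then 1 else -1).
  assert (Hsg : forall i, Rabs (sg i) = 1).
  { intros i; unfold sg; destruct Rle_dec; [rewrite Rabs_R1 | rewrite Rabs_m1]; reflexivity. }
  destruct (MVT_cor2 (fun u => sum_upto (fun i => sg i * h i u) k)
              (fun u => sum_upto (fun i => sg i * h' i u) k) a b) as [c [Hc Hcab]]; [lra| |].
  { intros c Hc. apply (derivable_pt_lim_sum_upto (fun i u => sg i * h i u) (fun i u => sg i * h' i u)).
    intros i Hi. apply derivable_pt_lim_scal, Hh; auto. }
  assert (Hsum : sum_upto (fun i => Rabs (h i b - h i a)) k =
                 sum_upto (fun i => sg i * h i b) k - sum_upto (fun i => sg i * h i a) k).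
  { rewrite <- sum_upto_minus. apply sum_upto_ext. intros i _. unfold sg.
    destruct Rle_dec; [rewrite Rabs_right | rewrite Rabs_left]; lra. }
  assert (Hder : Rabs (sum_upto (fun i => sg i * h' i c) k) <= K).
  { eapply Rle_trans; [apply Rabs_sum_upto_le|].
    eapply Rle_trans; [|apply (HK c); lra].
    apply Req_le, sum_upto_ext. intros i _. rewrite Rabs_mult, Hsg. ring. }
  rewrite Hsum, Hc.
  pose proof (Rle_abs (sum_upto (fun i => sg i * h' i c) k)). nra.
Qed.

Section Barrier.

Lemma continuity_pt_eps (g : R -> R) (m e : R) :
  continuity_pt g m -> 0 < e ->
  exists d, 0 < d /\ forall u, Rabs (u - m) < d -> Rabs (g u - g m) < e.
Proof.
  intros Hg He. destruct (Hg e He) as [d [Hd Hu]]. exists d. split; [lra|].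
  intros u Hum. destruct (Req_dec u m) as [->|Hne].
  - rewrite Rminus_diag, Rabs_R0; lra.
  - apply (Hu u). split; [split; [exact I | auto] | exact Hum].
Qed.

Lemma derivable_pt_lim_neg_left (g : R -> R) (t l : R) :
  derivable_pt_lim g t l -> l < 0 ->
  exists d, 0 < d /\ forall k, -d < k < 0 -> g t < g (t + k).
Proof.
  intros Hg Hl. destruct (Hg (- l / 2)) as [d Hd]; [lra|].
  exists d. split; [apply cond_pos|]. intros k Hk.
  specialize (Hd k ltac:(lra) ltac:(rewrite Rabs_left; lra)).
  apply Rabs_def2 in Hd.
  assert (Hq : (g (t + k) - g t) / k * k = g (t + k) - g t) by (field; lra).
  nra.
Qed.

Lemma uniform_delta (k : nat) (P : nat -> R -> Prop) :
  (forall j d d', 0 < d' <= d -> P j d -> P j d') ->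
  (forall j, (j < k)%nat -> exists d, 0 < d /\ P j d) ->
  exists d, 0 < d /\ forall j, (j < k)%nat -> P j d.
Proof.
  intros Hmono. induction k as [|k IHk]; intros HP.
  - exists 1. split; [lra | intros; lia].
  - destruct IHk as [d1 [Hd1 H1]]; [intros; apply HP; lia|].
    destruct (HP k) as [d2 [Hd2 H2]]; [lia|].
    pose proof (Rmin_l d1 d2). pose proof (Rmin_r d1 d2).
    assert (0 < Rmin d1 d2) by (apply Rmin_pos; auto).
    exists (Rmin d1 d2). split; auto. intros j Hj.
    destruct (Nat.eq_dec j k) as [->|].
    + apply Hmono with d2; auto; lra.
    + apply Hmono with d1; [lra | apply H1; lia].
Qed.

Lemma continuity_pt_le_of_lt_left (g : R -> R) (a m : R) : a < m -> continuity_pt g m ->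
  (forall u, a < u < m -> g u < 0) -> g m <= 0.
Proof.
  intros Ham Hg Hleft. apply Rnot_lt_le. intros Hpos.
  destruct (continuity_pt_eps g m (g m) Hg Hpos) as [d [Hd Hnear]].
  pose proof (Rmin_l d (m - a)). pose proof (Rmin_r d (m - a)).
  assert (0 < Rmin d (m - a)) by (apply Rmin_pos; lra).
  specialize (Hnear (m - Rmin d (m - a) / 2) ltac:(rewrite Rabs_left; lra)).
  apply Rabs_def2 in Hnear. specialize (Hleft (m - Rmin d (m - a) / 2) ltac:(lra)). lra.
Qed.

Variables (k : nat) (f : nat -> R -> R) (phi : R -> R) (a T : R).
Hypothesis HaT : a < T.
Hypothesis Hphi : forall t, a < t <= T -> continuity_pt phi t.
Hypothesis Hf : forall j t, (j < k)%nat -> a < t <= T -> continuity_pt (f j) t.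
Hypothesis Hinit :
  forall j, (j < k)%nat -> exists d, 0 < d /\ forall t, a < t <= a + d -> f j t < phi t.
Hypothesis Hcross :
  forall i t, (i < k)%nat -> a < t <= T -> f i t = phi t ->
    (forall j, (j < k)%nat -> f j t <= phi t) ->
    exists l, derivable_pt_lim (fun u => f i u - phi u) t l /\ l < 0.

Let below_until (t : R) : Prop :=
  a < t <= T /\ forall j u, (j < k)%nat -> a < u <= t -> f j u < phi u.

Let continuity_gap j t : (j < k)%nat -> a < t <= T -> continuity_pt (fun u => f j u - phi u) t.
Proof. intros. apply continuity_pt_minus; auto. Qed.

Lemma below_until_extend (t : R) :
  a < t < T -> (forall j u, (j < k)%nat -> a < u <= t -> f j u < phi u) ->
  exists t', t < t' /\ below_until t'.
Proof.
  intros Ht Hbelow.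
  destruct (uniform_delta k (fun j d => forall u, t <= u < t + d -> f j u < phi u))
    as [d [Hd Hall]].
  { intros j d d' Hd' H u Hu. apply H; lra. }
  { intros j Hj. destruct (continuity_pt_eps _ t (phi t - f j t)
                   (continuity_gap j t Hj ltac:(lra))) as [d [Hd Hu]].
    { specialize (Hbelow j t Hj ltac:(lra)). lra. }
    exists d. split; auto. intros u Hu'.
    specialize (Hu u ltac:(apply Rabs_def1; lra)). apply Rabs_def2 in Hu.
    specialize (Hbelow j t Hj ltac:(lra)). lra. }
  pose proof (Rmin_l d (T - t)). pose proof (Rmin_r d (T - t)).
  assert (0 < Rmin d (T - t)) by (apply Rmin_pos; lra).
  exists (t + Rmin d (T - t) / 2). split; [lra|]. split; [lra|].
  intros j u Hj Hu. destruct (Rle_dec u t); [apply Hbelow; auto; lra | apply Hall; auto; lra].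
Qed.

Lemma barrier_strict : forall j, (j < k)%nat -> f j T < phi T.
Proof.
  assert (Hstart : exists t, below_until t).
  { destruct (uniform_delta k (fun j d => forall t, a < t <= a + d -> f j t < phi t))
      as [d [Hd Hall]]; auto.
    { intros j d d' Hd' H t Ht. apply H; lra. }
    pose proof (Rmin_l d (T - a)). pose proof (Rmin_r d (T - a)).
    assert (0 < Rmin d (T - a)) by (apply Rmin_pos; lra).
    exists (a + Rmin d (T - a)). split; [lra|]. intros j u Hj Hu. apply Hall; auto; lra. }
  destruct (completeness below_until) as [m [Hub Hlub]]; auto.
  { exists T. intros t [Ht _]. lra. }
  assert (Ham : a < m) by (destruct Hstart as [t Ht]; pose proof (Hub t Ht); destruct Ht; lra).
  assert (HmT : m <= T) by (apply Hlub; intros t [Ht _]; lra).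
  assert (Hbefore : forall j u, (j < k)%nat -> a < u < m -> f j u < phi u).
  { intros j u Hj Hu. apply NNPP. intros Hno. assert (m <= u); [|lra].
    apply Hlub. intros t [Ht Hbt]. apply Rnot_lt_le. intros Hut. apply Hno. apply Hbt; auto; lra. }
  assert (Hat : forall j, (j < k)%nat -> f j m <= phi m).
  { intros j Hj. enough (f j m - phi m <= 0) by lra.
    apply (continuity_pt_le_of_lt_left _ a m Ham (continuity_gap j m Hj ltac:(lra))).
    intros u Hu. specialize (Hbefore j u Hj Hu). lra. }
  assert (Hstrict : forall j, (j < k)%nat -> f j m < phi m).
  { intros i Hi. destruct (Rle_lt_or_eq_dec _ _ (Hat i Hi)) as [|Heq]; auto. exfalso.
    destruct (Hcross i m Hi ltac:(lra) Heq Hat) as [l [Hl Hlneg]].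
    destruct (derivable_pt_lim_neg_left _ _ _ Hl Hlneg) as [d [Hd Hleft]].
    pose proof (Rmin_l d (m - a)). pose proof (Rmin_r d (m - a)).
    assert (0 < Rmin d (m - a)) by (apply Rmin_pos; lra).
    specialize (Hleft (- (Rmin d (m - a) / 2)) ltac:(lra)).
    specialize (Hbefore i (m + - (Rmin d (m - a) / 2)) Hi ltac:(lra)). lra. }
  destruct (Req_dec m T) as [<-|HmT']; auto.
  exfalso. destruct (below_until_extend m) as [t' [Hmt' Ht']]; [lra| |].
  - intros j u Hj Hu. destruct (Req_dec u m) as [->|]; [auto | apply Hbefore; auto; lra].
  - pose proof (Hub t' Ht'). lra.
Qed.

End Barrier.
Lemma Rle_of_le_add_mul_pos (p q K : R) :
  0 <= K -> (forall h, 0 < h -> p <= q + K * h) -> p <= q.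
Proof.
  intros HK H. apply Rle_plus_epsilon. intros e He.
  assert (Hh : 0 < e / (K + 1)) by (apply Rdiv_lt_0_compat; lra).
  specialize (H _ Hh).
  assert (K * (e / (K + 1)) <= e); [|lra].
  apply (Rmult_le_reg_r (K + 1)); [lra|].
  replace (K * (e / (K + 1)) * (K + 1)) with (K * e) by (field; lra). nra.
Qed.

Lemma is_lub_gt_exists (E : R -> Prop) (m u : R) :
  is_lub E m -> u < m -> exists y, E y /\ u < y.
Proof.
  intros [_ Hlub] Hu. apply NNPP. intros Hno. assert (m <= u); [|lra].
  apply Hlub. intros y Ey. apply Rnot_lt_le. intros Huy. apply Hno. eauto.
Qed.

Section CumulativeDistribution.

Variables (F : R -> R) (L R0 : R).
Hypothesis HF : cdf_ML F L.
Hypothesis HR : is_Linf_norm F R0.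

Lemma cdf_increment_bounds x y : x <= y -> 0 <= F y - F x <= R0 * (y - x).
Proof.
  intros Hxy. destruct HF as [Hmono _]. destruct HR as [Hlip _].
  specialize (Hmono x y Hxy). specialize (Hlip x y Hxy). lra.
Qed.

Lemma Linf_norm_nonneg : 0 <= R0.
Proof. pose proof (cdf_increment_bounds 0 1). lra. Qed.

(* [F] is Lipschitz, so the supremum of a strict sublevel set lies on the level. *)
Lemma cdf_lub_level (c l b : R) : is_lub (fun y => F y - c < l) b -> F b = c + l.
Proof.
  intros Hb. pose proof Linf_norm_nonneg as HR0. apply Rle_antisym.
  - apply (Rle_of_le_add_mul_pos _ _ R0 HR0). intros h Hh.
    destruct (is_lub_gt_exists _ _ (b - h) Hb) as [u [Hu Hbu]]; [lra|].
    assert (u <= b) by (apply (proj1 Hb); exact Hu).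
    pose proof (cdf_increment_bounds u b ltac:(lra)). nra.
  - apply (Rle_of_le_add_mul_pos _ _ R0 HR0). intros h Hh.
    assert (Hout : ~ F (b + h) - c < l) by (intros Hin; pose proof (proj1 Hb _ Hin); lra).
    pose proof (cdf_increment_bounds b (b + h) ltac:(lra)). lra.
Qed.

Lemma cdf_level_in_supp (l : R) : 0 < l <= L -> exists c, in_supp F c /\ F c = l.
Proof.
  intros Hl. destruct HF as [Hmono [a0 [b0 Hab]]].
  destruct (completeness (fun y => F y - 0 < l)) as [c Hc].
  { exists b0. intros y Hy. apply Rnot_lt_le. intros Hb0y.
    rewrite (proj2 (Hab y)) in Hy by lra. lra. }
  { exists (Rmin a0 b0). rewrite (proj1 (Hab _)) by apply Rmin_l. lra. }
  exists c. split.
  - intros e He.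
    assert (Hout : ~ F (c + e) - 0 < l) by (intros Hin; pose proof (proj1 Hc _ Hin); lra).
    destruct (is_lub_gt_exists _ _ (c - e) Hc) as [u [Hu Hcu]]; [lra|].
    pose proof (Hmono (c - e) u ltac:(lra)). lra.
  - rewrite (cdf_lub_level _ _ _ Hc). ring.
Qed.

Section Support.

Variables (xmin xmax : R).
Hypothesis HL : 0 < L.
Hypothesis Hint : smallest_interval F xmin xmax.

Lemma cdf_xmin_nonpos : F xmin <= 0.
Proof.
  apply Rle_plus_epsilon. intros e He.
  pose proof (Rmin_l e L). pose proof (Rmin_r e L).
  destruct (cdf_level_in_supp (Rmin e L)) as [c [Hc HFc]].
  { split; [apply Rmin_pos|]; lra. }
  pose proof (cdf_increment_bounds xmin c (proj1 ((proj1 Hint) c Hc))). lra.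
Qed.

Lemma cdf_xmax_ge_mass : L <= F xmax.
Proof.
  destruct (cdf_level_in_supp L) as [c [Hc HFc]]; [lra|].
  pose proof (cdf_increment_bounds c xmax (proj2 ((proj1 Hint) c Hc))). lra.
Qed.

End Support.

End CumulativeDistribution.

Lemma elln_pos L n : 0 < L -> 0 < elln L n.
Proof. intros HL. unfold elln. apply Rdiv_lt_0_compat; auto. apply pow_lt; lra. Qed.

Lemma Nn_pos n : (1 <= Nn n)%nat.
Proof. unfold Nn. pose proof (Nat.pow_nonzero 2 n). lia. Qed.

Lemma INR_Nn_mul_elln L n : INR (Nn n) * elln L n = L.
Proof.
  unfold Nn, elln. rewrite pow_INR. replace (INR 2) with 2 by (simpl; lra).
  field. apply pow_nonzero. lra.
Qed.

Section InitialPoints.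

Variables (F : R -> R) (L R0 xmin xmax : R) (n : nat) (xbar : nat -> R).
Hypothesis HL : 0 < L.
Hypothesis HF : cdf_ML F L.
Hypothesis HR : is_Linf_norm F R0.
Hypothesis Hxbar : initial_points F L xmin n xbar.

Lemma cdf_initial_points i : (i <= Nn n)%nat -> F (xbar i) = F xmin + INR i * elln L n.
Proof.
  destruct Hxbar as [H0 Hlub]. induction i as [|i IHi]; intros Hi.
  - rewrite H0. simpl. lra.
  - pose proof (cdf_lub_level F L R0 HF HR _ _ _ (Hlub (S i) ltac:(lia))) as Hstep.
    simpl in Hstep. rewrite Nat.sub_0_r, IHi in Hstep by lia. rewrite S_INR. lra.
Qed.

Lemma elln_le_initial_gap i : (i < Nn n)%nat -> elln L n <= R0 * (xbar (S i) - xbar i).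
Proof.
  intros Hi. assert (Hle : xbar i <= xbar (S i)).
  { apply Rnot_lt_le. intros Hlt.
    pose proof (cdf_increment_bounds F L R0 HF HR _ _ (Rlt_le _ _ Hlt)).
    rewrite !cdf_initial_points, S_INR in * by lia.
    pose proof (elln_pos L n HL). lra. }
  pose proof (cdf_increment_bounds F L R0 HF HR _ _ Hle).
  rewrite !cdf_initial_points, S_INR in * by lia. lra.
Qed.

Lemma initial_spread_le :
  smallest_interval F xmin xmax -> xbar (Nn n) - xbar O <= xmax - xmin.
Proof.
  intros Hint. pose proof (Nn_pos n).
  pose proof (cdf_initial_points (Nn n - 1) ltac:(lia)) as Hlast.
  pose proof (cdf_xmin_nonpos F L R0 HF HR xmin xmax HL Hint).
  pose proof (cdf_xmax_ge_mass F L R0 HF HR xmin xmax HL Hint).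
  pose proof (INR_Nn_mul_elln L n).
  rewrite minus_INR in Hlast by lia. simpl INR in Hlast.
  destruct Hxbar as [Hxbar0 Hlub]. rewrite Hxbar0.
  enough (xbar (Nn n) <= xmax) by lra.
  apply (proj2 (Hlub (Nn n) ltac:(lia))). intros y Hy. apply Rnot_lt_le. intros Hxy.
  pose proof (cdf_increment_bounds F L R0 HF HR _ _ (Rlt_le _ _ Hxy)). nra.
Qed.

End InitialPoints.

Lemma v_antitone v dv : V1 v dv -> forall a b, 0 <= a -> a <= b -> v b <= v a.
Proof.
  intros [_ [_ [_ Hdec]]] a b Ha Hab.
  destruct (Req_dec a b) as [->|]; [lra | apply Rlt_le, Hdec; lra].
Qed.

Lemma right_cont0_eps (g : R -> R) (e : R) :
  right_cont0 g -> 0 < e ->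
  exists d, 0 < d /\ forall u, 0 <= u <= d -> Rabs (g u - g 0) < e.
Proof.
  intros Hg He. destruct (Hg e He) as [d [Hd Hu]]. exists (d / 2). split; [lra|].
  intros u Hu'. apply (Hu u). split; [lra|]. simpl. unfold R_dist.
  rewrite Rminus_0_r, Rabs_right; lra.
Qed.

Lemma continuity_pt_of_derivable_pt_lim (g : R -> R) (t l : R) :
  derivable_pt_lim g t l -> continuity_pt g t.
Proof. intros Hg. apply derivable_continuous_pt. exists l. exact Hg. Qed.

Lemma derivable_pt_lim_hyperbola (c t0 t : R) :
  t <> t0 -> derivable_pt_lim (fun u => c / (u - t0)) t (- c / (t - t0) ^ 2).
Proof. intros Ht. apply is_derive_Reals. auto_derive; [lra | field; lra]. Qed.

Section FollowTheLeader.

Variables (v dv : R -> R) (vmax L : R) (n : nat) (xbar : nat -> R) (x : nat -> R -> R).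
Hypothesis HV1 : V1 v dv.
Hypothesis HV2 : V2 v vmax.
Hypothesis HV3 : V3 dv.
Hypothesis HL : 0 < L.
Hypothesis Hx : ftl_solution v vmax L n xbar x.

Local Notation N := (Nn n).
Local Notation y := (yn L n x).

(* The leader is given the velocity [vmax] so that [x_i' = velocity i] for all [i <= N]. *)
Definition velocity (i : nat) (t : R) : R :=
  if Compare_dec.lt_dec i N then v (y i t) else vmax.

Definition gap (i : nat) (t : R) : R := x (S i) t - x i t.

Definition velocity_gradient (i : nat) (t : R) : R :=
  (velocity (S i) t - velocity i t) / gap i t.

Definition neg_y_dv (i : nat) (t : R) : R :=
  if Compare_dec.lt_dec i N then - (y i t * dv (y i t)) else 0.

Lemma velocity_follower i t : (i < N)%nat -> velocity i t = v (y i t).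
Proof. intros Hi. unfold velocity. now destruct Compare_dec.lt_dec; [|lia]. Qed.

Lemma velocity_leader t : velocity N t = vmax.
Proof. unfold velocity. now destruct Compare_dec.lt_dec; [lia|]. Qed.

Lemma gap_pos i t : (i < N)%nat -> 0 <= t -> 0 < gap i t.
Proof. intros Hi Ht. destruct Hx as [_ [_ [Hord _]]]. unfold gap. specialize (Hord i t Hi Ht). lra. Qed.

Lemma yn_pos i t : (i < N)%nat -> 0 <= t -> 0 < y i t.
Proof. intros Hi Ht. apply Rdiv_lt_0_compat; [apply elln_pos, HL | apply gap_pos; auto]. Qed.

Lemma velocity_le_vmax i t : 0 <= t -> velocity i t <= vmax.
Proof.
  intros Ht. unfold velocity. destruct Compare_dec.lt_dec as [Hi|]; [|lra].
  rewrite <- HV2. apply (v_antitone _ _ HV1); [lra | apply Rlt_le, yn_pos; auto].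
Qed.

Lemma derivable_x i t : (i <= N)%nat -> 0 < t -> derivable_pt_lim (x i) t (velocity i t).
Proof.
  intros Hi Ht. destruct Hx as [_ [_ [_ [Hleader Hfollow]]]].
  destruct (Nat.eq_dec i N) as [->|]; [rewrite velocity_leader; auto|].
  rewrite velocity_follower by lia. apply Hfollow; auto; lia.
Qed.

Lemma derivable_gap i t : (i < N)%nat -> 0 < t ->
  derivable_pt_lim (gap i) t (velocity (S i) t - velocity i t).
Proof. intros Hi Ht. apply derivable_pt_lim_minus; apply derivable_x; auto; lia. Qed.

Lemma derivable_yn i t : (i < N)%nat -> 0 < t ->
  derivable_pt_lim (fun u => y i u) t (- y i t * velocity_gradient i t).
Proof.
  intros Hi Ht. pose proof (gap_pos i t Hi ltac:(lra)).
  pose proof (derivable_pt_lim_div (fct_cte (elln L n)) (gap i) t 0 _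
                (derivable_pt_lim_const _ _) (derivable_gap i t Hi Ht) ltac:(lra)) as Hdiv.
  unfold div_fct, fct_cte in Hdiv.
  replace (- y i t * velocity_gradient i t) with
    ((0 * gap i t - (velocity (S i) t - velocity i t) * elln L n) / (gap i t)²); [exact Hdiv|].
  unfold velocity_gradient, yn, Rsqr. fold (gap i t). field. lra.
Qed.

Lemma derivable_velocity i t : (i <= N)%nat -> 0 < t ->
  derivable_pt_lim (fun u => velocity i u) t (neg_y_dv i t * velocity_gradient i t).
Proof.
  intros Hi Ht. unfold velocity, neg_y_dv. destruct Compare_dec.lt_dec as [Hlt|].
  - pose proof (derivable_pt_lim_comp (fun u => y i u) v t _ _ (derivable_yn i t Hlt Ht)
                  (proj1 HV1 _ (yn_pos i t Hlt ltac:(lra)))) as Hcomp.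
    unfold comp in Hcomp. replace (- (y i t * dv (y i t)) * velocity_gradient i t)
      with (dv (y i t) * (- y i t * velocity_gradient i t)) by ring. exact Hcomp.
  - rewrite Rmult_0_l. apply derivable_pt_lim_const.
Qed.

Lemma derivable_velocity_gradient i t : (i < N)%nat -> 0 < t ->
  derivable_pt_lim (fun u => velocity_gradient i u) t
    ((neg_y_dv (S i) t * velocity_gradient (S i) t - neg_y_dv i t * velocity_gradient i t)
       / gap i t - velocity_gradient i t ^ 2).
Proof.
  intros Hi Ht. pose proof (gap_pos i t Hi ltac:(lra)).
  pose proof (derivable_pt_lim_minus _ _ _ _ _
    (derivable_velocity (S i) t ltac:(lia) Ht) (derivable_velocity i t ltac:(lia) Ht)) as Hnum.
  pose proof (derivable_pt_lim_div _ (gap i) t _ _ Hnum (derivable_gap i t Hi Ht) ltac:(lra))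
    as Hdiv.
  unfold div_fct, minus_fct in Hdiv.
  replace ((neg_y_dv (S i) t * velocity_gradient (S i) t - neg_y_dv i t * velocity_gradient i t)
             / gap i t - velocity_gradient i t ^ 2) with
    (((neg_y_dv (S i) t * velocity_gradient (S i) t - neg_y_dv i t * velocity_gradient i t)
        * gap i t - (velocity (S i) t - velocity i t) * (velocity (S i) t - velocity i t))
       / (gap i t)²); [exact Hdiv|].
  assert (Hz : velocity_gradient i t = (velocity (S i) t - velocity i t) / gap i t)
    by reflexivity.
  rewrite Hz. unfold Rsqr. field. lra.
Qed.

Lemma yn_right_cont0 i : (i < N)%nat -> right_cont0 (fun u => y i u).
Proof.
  intros Hi. unfold right_cont0. destruct Hx as [_ [Hcont [Hord _]]].
  pose proof (Hord i 0 Hi (Rle_refl 0)).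
  apply (limit_mul (fun _ => elln L n) (fun u => / (x (S i) u - x i u)) _
           (elln L n) (/ (x (S i) 0 - x i 0))).
  - exact (limit_free (fun _ => elln L n) _ 0 0).
  - apply limit_inv; [apply limit_minus; apply Hcont; lia | lra].
Qed.

Lemma velocity_gradient_nonneg_at_max k t : (k < N)%nat -> 0 <= t ->
  (forall j, (j < N)%nat -> y j t <= y k t) -> 0 <= velocity_gradient k t.
Proof.
  intros Hk Ht Hmax. pose proof (gap_pos k t Hk Ht).
  apply Rdiv_le_0_compat; [|lra].
  enough (velocity k t <= velocity (S k) t) by lra.
  rewrite velocity_follower by lia. destruct (Nat.eq_dec (S k) N) as [Hlast|].
  - rewrite Hlast, velocity_leader, <- HV2.
    apply (v_antitone _ _ HV1); [lra | apply Rlt_le, yn_pos; auto].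
  - rewrite velocity_follower by lia. apply (v_antitone _ _ HV1).
    + apply Rlt_le, yn_pos; auto; lia.
    + apply Hmax; lia.
Qed.

Lemma neg_y_dv_nonneg i t : 0 <= t -> 0 <= neg_y_dv i t.
Proof.
  intros Ht. unfold neg_y_dv. destruct Compare_dec.lt_dec as [Hi|]; [|lra].
  pose proof (HV3 0 (y i t) (Rle_refl 0) (Rlt_le _ _ (yn_pos i t Hi Ht))). lra.
Qed.

Lemma yn_succ_lt_of_gradient_pos k t : (S k < N)%nat -> 0 <= t ->
  0 < velocity_gradient k t -> y (S k) t < y k t.
Proof.
  intros Hk Ht Hz. pose proof (gap_pos k t ltac:(lia) Ht).
  assert (Hv : velocity k t < velocity (S k) t).
  { enough (0 < velocity (S k) t - velocity k t) by lra.
    apply (Rmult_lt_reg_r (/ gap k t)); [apply Rinv_0_lt_compat; lra|].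
    rewrite Rmult_0_l. exact Hz. }
  rewrite !velocity_follower in Hv by lia.
  apply Rnot_le_lt. intros Hge.
  pose proof (v_antitone _ _ HV1 (y k t) (y (S k) t)
                (Rlt_le _ _ (yn_pos k t ltac:(lia) Ht)) Hge). lra.
Qed.

Lemma neg_y_dv_succ_le k t : (k < N)%nat -> 0 <= t -> 0 < velocity_gradient k t ->
  neg_y_dv (S k) t <= neg_y_dv k t.
Proof.
  intros Hk Ht Hz. destruct (Nat.lt_ge_cases (S k) N) as [HSk|HSk].
  - pose proof (HV3 _ _ (Rlt_le _ _ (yn_pos (S k) t HSk Ht))
                  (Rlt_le _ _ (yn_succ_lt_of_gradient_pos k t HSk Ht Hz))).
    unfold neg_y_dv. do 2 (destruct Compare_dec.lt_dec; [|lia]). lra.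
  - unfold neg_y_dv at 1. destruct Compare_dec.lt_dec; [lia|]. apply neg_y_dv_nonneg; auto.
Qed.

(* This is where (V3) enters. *)
Lemma velocity_gradient_derivative_le_at_max k t : (k < N)%nat -> 0 < t ->
  0 < velocity_gradient k t ->
  (forall j, (j < N)%nat -> velocity_gradient j t <= velocity_gradient k t) ->
  (neg_y_dv (S k) t * velocity_gradient (S k) t - neg_y_dv k t * velocity_gradient k t)
    / gap k t - velocity_gradient k t ^ 2 <= - velocity_gradient k t ^ 2.
Proof.
  intros Hk Ht Hz Hmax.
  pose proof (neg_y_dv_succ_le k t Hk ltac:(lra) Hz).
  pose proof (neg_y_dv_nonneg (S k) t ltac:(lra)).
  pose proof (Rinv_0_lt_compat _ (gap_pos k t Hk ltac:(lra))).
  assert (Hflux : neg_y_dv (S k) t * velocity_gradient (S k) t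
                  <= neg_y_dv k t * velocity_gradient k t).
  { destruct (Nat.lt_ge_cases (S k) N) as [HSk|HSk].
    - pose proof (Hmax (S k) HSk). nra.
    - assert (neg_y_dv (S k) t = 0) as ->
        by (unfold neg_y_dv; destruct Compare_dec.lt_dec; [lia | reflexivity]).
      nra. }
  unfold Rdiv. nra.
Qed.

Lemma velocity_gradient_below_hyperbola_near j t0 c : (j < N)%nat -> 0 < t0 -> 0 < c ->
  exists d, 0 < d /\ forall t, t0 < t <= t0 + d -> velocity_gradient j t < c / (t - t0).
Proof.
  intros Hj Ht0 Hc.
  destruct (continuity_pt_eps _ t0 1 (continuity_pt_of_derivable_pt_lim _ _ _
              (derivable_velocity_gradient j t0 Hj Ht0)) Rlt_0_1) as [e [He Hnear]].
  set (B := Rabs (velocity_gradient j t0) + 1).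
  pose proof (Rle_abs (velocity_gradient j t0)). pose proof (Rabs_pos (velocity_gradient j t0)).
  assert (HB : 0 < B) by (unfold B; lra).
  pose proof (Rmin_l (e / 2) (c / B)). pose proof (Rmin_r (e / 2) (c / B)).
  exists (Rmin (e / 2) (c / B)). split; [apply Rmin_pos; [lra | apply Rdiv_lt_0_compat; lra]|].
  intros t Ht. specialize (Hnear t ltac:(rewrite Rabs_right; lra)). apply Rabs_def2 in Hnear.
  assert (B <= c / (t - t0)).
  { apply (Rmult_le_reg_r (t - t0)); [lra|].
    replace (c / (t - t0) * (t - t0)) with c by (field; lra).
    assert (B * (c / B) = c) by (field; lra). nra. }
  unfold B in *. lra.
Qed.

(* One-sided Oleinik estimate: compare with the barrier [c / (t - t0)], [c > 1],
   which solves [z' = - z^2 / c > - z^2]. *)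
Lemma velocity_gradient_le_inv T i : 0 < T -> (i < N)%nat -> velocity_gradient i T <= 1 / T.
Proof.
  intros HT Hi. apply Rnot_lt_le. intros Hgt. set (zT := velocity_gradient i T) in *.
  assert (HzT : 1 < zT * T).
  { apply (Rmult_lt_compat_r T) in Hgt; auto. replace (1 / T * T) with 1 in Hgt by (field; lra). lra. }
  assert (Hz0 : 0 < zT) by nra.
  set (c := (1 + zT * T) / 2). set (t0 := (T - c / zT) / 2).
  assert (Hc1 : 1 < c) by (unfold c; lra).
  assert (Hcz : c / zT * zT = c) by (field; lra).
  assert (HcT : c / zT < T) by (apply (Rmult_lt_reg_r zT); [lra | unfold c in *; nra]).
  assert (Hc0 : 0 < c / zT) by (apply Rdiv_lt_0_compat; lra).
  assert (Ht0 : 0 < t0 < T) by (unfold t0; lra).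
  assert (Hend : c / (T - t0) < zT).
  { apply (Rmult_lt_reg_r (T - t0)); [lra|].
    replace (c / (T - t0) * (T - t0)) with c by (field; lra). unfold t0, c in *. nra. }
  enough (zT < c / (T - t0)) by lra.
  apply (barrier_strict N velocity_gradient (fun u => c / (u - t0)) t0 T); auto; try lra.
  - intros t Ht. apply (continuity_pt_of_derivable_pt_lim _ _ _
                          (derivable_pt_lim_hyperbola c t0 t ltac:(lra))).
  - intros j t Hj Ht. apply (continuity_pt_of_derivable_pt_lim _ _ _
                               (derivable_velocity_gradient j t Hj ltac:(lra))).
  - intros j Hj. apply velocity_gradient_below_hyperbola_near; auto; lra.
  - intros k t Hk Ht Htouch Hbelow. eexists. split.
    + apply (derivable_pt_lim_minus (fun u => velocity_gradient k u) (fun u => c / (u - t0)));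
        [apply derivable_velocity_gradient; auto; lra | apply derivable_pt_lim_hyperbola; lra].
    + assert (Hp : 0 < c / (t - t0)) by (apply Rdiv_lt_0_compat; lra).
      assert (Hsq : c / (t - t0) ^ 2 * c = c / (t - t0) * (c / (t - t0))) by (field; lra).
      pose proof (velocity_gradient_derivative_le_at_max k t Hk ltac:(lra) ltac:(lra)
                    ltac:(rewrite Htouch; exact Hbelow)).
      rewrite Htouch in *. unfold Rdiv at 3 in Hsq.
      assert (0 < c / (t - t0) ^ 2) by (apply Rdiv_lt_0_compat; [lra | apply pow_lt; lra]).
      nra.
Qed.

Section MaximumPrinciple.

Variable M : R.
Hypothesis Hinit : forall i, (i < N)%nat -> y i 0 <= M.

(* Compare with the barrier [M + eps (1 + t)]: at a first touching index [k],
   [y_k] is the largest density, so [y_k' = - y_k z_k <= 0 < eps]. *)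
Lemma yn_le_initial_max T i : 0 < T -> (i < N)%nat -> y i T <= M.
Proof.
  intros HT Hi. apply Rnot_lt_le. intros HMT.
  set (eps := (y i T - M) / (2 * (1 + T))).
  assert (Heps : 0 < eps) by (apply Rdiv_lt_0_compat; lra).
  assert (Hbarrier : forall t, derivable_pt_lim (fun u => M + eps * (1 + u)) t eps).
  { intros t. apply is_derive_Reals. auto_derive; [auto | ring]. }
  assert (Hlt : y i T < M + eps * (1 + T)).
  { apply (barrier_strict N (fun j u => y j u) (fun u => M + eps * (1 + u)) 0 T); auto.
    - intros t _. exact (continuity_pt_of_derivable_pt_lim _ _ _ (Hbarrier t)).
    - intros j t Hj Ht.
      exact (continuity_pt_of_derivable_pt_lim _ _ _ (derivable_yn j t Hj ltac:(lra))).
    - intros j Hj. destruct (right_cont0_eps _ eps (yn_right_cont0 j Hj) Heps) as [d [Hd Hu]].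
      exists d. split; auto. intros t Ht.
      specialize (Hu t ltac:(lra)). apply Rabs_def2 in Hu. specialize (Hinit j Hj). nra.
    - intros k t Hk Ht Htouch Hbelow.
      exists (- y k t * velocity_gradient k t - eps). split.
      + apply (derivable_pt_lim_minus (fun u => y k u) (fun u => M + eps * (1 + u)));
          [apply derivable_yn; auto; lra | apply Hbarrier].
      + pose proof (yn_pos k t Hk ltac:(lra)).
        assert (0 <= velocity_gradient k t).
        { apply velocity_gradient_nonneg_at_max; auto; [lra|]. rewrite Htouch. exact Hbelow. }
        nra. }
  assert (eps * (1 + T) = (y i T - M) / 2) by (unfold eps; field; lra).
  lra.
Qed.

Lemma spread_growth T : 0 < T -> x N T - x O T <= x N 0 - x O 0 + T * (vmax - v M).
Proof.
  intros HT. pose proof (Nn_pos n).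
  set (g u := x N u - x O u).
  assert (Hslope : forall u, 0 < u -> velocity N u - velocity O u <= vmax - v M).
  { intros u Hu. rewrite velocity_leader, velocity_follower by lia.
    pose proof (yn_le_initial_max u 0 Hu ltac:(lia)).
    pose proof (yn_pos 0 u ltac:(lia) ltac:(lra)).
    pose proof (v_antitone _ _ HV1 (y 0 u) M ltac:(lra) ltac:(lra)). lra. }
  assert (HK : 0 <= vmax - v M).
  { pose proof (Hslope T HT). pose proof (velocity_le_vmax O T ltac:(lra)).
    rewrite velocity_leader in *. lra. }
  assert (Hstep : forall eta, 0 < eta < T -> g T <= g eta + T * (vmax - v M)).
  { intros eta Heta.
    destruct (MVT_cor2 g (fun u => velocity N u - velocity O u) eta T) as [c [Hc Hcr]]; [lra| |].
    - intros c Hc. apply derivable_pt_lim_minus; apply derivable_x; lia || lra.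
    - pose proof (Hslope c ltac:(lra)). nra. }
  assert (Hg0 : right_cont0 g).
  { destruct Hx as [_ [Hcont _]]. unfold right_cont0. apply limit_minus; apply Hcont; lia. }
  apply Rle_plus_epsilon. intros e He.
  destruct (right_cont0_eps g e Hg0 He) as [d [Hd Hnear]].
  pose proof (Rmin_l d T). pose proof (Rmin_r d T).
  assert (0 < Rmin d T) by (apply Rmin_pos; lra).
  specialize (Hnear (Rmin d T / 2) ltac:(lra)). apply Rabs_def2 in Hnear.
  specialize (Hstep (Rmin d T / 2) ltac:(lra)). unfold g in *. lra.
Qed.

(* [z_i <= 1/tau] gives [|Delta w_i| <= 2 Delta x_i / tau - Delta w_i], which telescopes. *)
Lemma abs_yn_derivative_le i tau : (i < N)%nat -> 0 < tau ->
  elln L n * Rabs (y i tau * velocity_gradient i tau)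
    <= M ^ 2 * (2 / tau * gap i tau - (velocity (S i) tau - velocity i tau)).
Proof.
  intros Hi Htau.
  pose proof (gap_pos i tau Hi ltac:(lra)) as Hd.
  pose proof (yn_pos i tau Hi ltac:(lra)) as Hy.
  pose proof (yn_le_initial_max tau i Htau Hi) as HyM.
  pose proof (velocity_gradient_le_inv tau i Htau Hi) as Hz.
  assert (Hell : elln L n = y i tau * gap i tau) by (unfold yn, gap; field; fold (gap i tau); lra).
  assert (Hdw : velocity (S i) tau - velocity i tau = velocity_gradient i tau * gap i tau)
    by (unfold velocity_gradient; field; lra).
  rewrite Hell, Hdw, Rabs_mult, (Rabs_right (y i tau)) by lra.
  assert (Hy2 : y i tau ^ 2 <= M ^ 2) by (apply pow_incr; lra).
  assert (Habs : Rabs (velocity_gradient i tau) <= 2 / tau - velocity_gradient i tau).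
  { unfold Rdiv in *. destruct (Rle_dec 0 (velocity_gradient i tau)).
    - rewrite Rabs_right; lra.
    - rewrite Rabs_left by lra. pose proof (Rinv_0_lt_compat _ Htau). lra. }
  pose proof (Rabs_pos (velocity_gradient i tau)).
  assert (y i tau ^ 2 * (gap i tau * Rabs (velocity_gradient i tau))
          <= M ^ 2 * (gap i tau * Rabs (velocity_gradient i tau)))
    by (apply Rmult_le_compat_r; [apply Rmult_le_pos|]; lra).
  assert (M ^ 2 * (gap i tau * Rabs (velocity_gradient i tau))
          <= M ^ 2 * (gap i tau * (2 / tau - velocity_gradient i tau))).
  { apply Rmult_le_compat_l; [apply pow2_ge_0 | nra]. }
  nra.
Qed.

Lemma sum_abs_yn_derivative_le tau : 0 < tau ->
  sum_upto (fun i => elln L n * Rabs (y i tau * velocity_gradient i tau)) N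
    <= M ^ 2 * (2 / tau * (x N tau - x O tau)).
Proof.
  intros Htau. eapply Rle_trans.
  { apply (sum_upto_le _ (fun i => M ^ 2 * (2 / tau * gap i tau
                                            - (velocity (S i) tau - velocity i tau)))).
    intros i Hi. apply abs_yn_derivative_le; auto. }
  rewrite sum_upto_scal, sum_upto_minus, sum_upto_scal. unfold gap.
  rewrite (sum_upto_telescope (fun i => x i tau)), (sum_upto_telescope (fun i => velocity i tau)).
  rewrite velocity_leader. pose proof (velocity_le_vmax O tau ltac:(lra)).
  pose proof (pow2_ge_0 M). nra.
Qed.

End MaximumPrinciple.

End FollowTheLeader.

Lemma rho_check_on_cell L n x t k z : 0 < L -> (k < Nn n)%nat ->
  INR k * elln L n < z < INR (S k) * elln L n -> rho_check L n x t z = yn L n x k t.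
Proof.
  intros HL Hk Hz. pose proof (elln_pos L n HL). unfold rho_check.
  rewrite (sum_upto_single _ _ k Hk).
  - unfold chi. destruct (Rle_dec _ z); [|lra]. destruct (Rlt_dec z _); [ring | lra].
  - intros i Hi Hik. unfold chi.
    destruct (Nat.lt_ge_cases i k) as [Hlt|Hge].
    + assert (INR (S i) <= INR k) by (apply le_INR; lia).
      destruct (Rle_dec _ z); [destruct (Rlt_dec z _); [nra|] |]; ring.
    + assert (INR (S k) <= INR i) by (apply le_INR; lia).
      destruct (Rle_dec _ z); [nra | ring].
Qed.

Lemma RiemannInt_rho_check_distance L n x t s : 0 < L ->
  exists pr : Riemann_integrable
                (fun z => Rabs (rho_check L n x t z - rho_check L n x s z)) 0 L,
    RiemannInt pr = sum_upto (fun i => elln L n * Rabs (yn L n x i t - yn L n x i s)) (Nn n).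
Proof.
  intros HL. pose proof (elln_pos L n HL).
  set (f z := Rabs (rho_check L n x t z - rho_check L n x s z)).
  assert (Hcells : forall k, (k <= Nn n)%nat -> is_RInt f 0 (INR k * elln L n)
            (sum_upto (fun i => elln L n * Rabs (yn L n x i t - yn L n x i s)) k)).
  { induction k as [|k IHk]; intros Hk; simpl sum_upto.
    - rewrite Rmult_0_l. apply (is_RInt_point f 0).
    - apply (is_RInt_Chasles f 0 (INR k * elln L n)); [apply IHk; lia|].
      apply (is_RInt_ext (fun _ => Rabs (yn L n x k t - yn L n x k s))).
      + intros z Hz. rewrite Rmin_left, Rmax_right in Hz by (rewrite S_INR; nra).
        unfold f. rewrite !(rho_check_on_cell L n x _ k z HL) by (auto; lia). reflexivity.
      + replace (elln L n * Rabs (yn L n x k t - yn L n x k s)) with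
          (scal (INR (S k) * elln L n - INR k * elln L n) (Rabs (yn L n x k t - yn L n x k s)))
          by (rewrite S_INR; unfold scal; simpl; unfold mult; simpl; ring).
        apply (@is_RInt_const R_NormedModule). }
  specialize (Hcells (Nn n) (le_n _)). rewrite INR_Nn_mul_elln in Hcells.
  exists (ex_RInt_Reals_0 f 0 L (ex_intro _ _ Hcells)).
  rewrite <- RInt_Reals. apply is_RInt_unique. exact Hcells.
Qed.

Section Estimate.

Variables (v dv : R -> R) (vmax L : R) (F : R -> R) (R0 xmin xmax delta : R).
Variables (n : nat) (xbar : nat -> R) (x : nat -> R -> R).
Hypothesis HV1 : V1 v dv.
Hypothesis HV2 : V2 v vmax.
Hypothesis HV3 : V3 dv.
Hypothesis HL : 0 < L.
Hypothesis HF : cdf_ML F L.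
Hypothesis HR : is_Linf_norm F R0.
Hypothesis Hint : smallest_interval F xmin xmax.
Hypothesis Hdelta : 0 < delta.
Hypothesis Hxbar : initial_points F L xmin n xbar.
Hypothesis Hx : ftl_solution v vmax L n xbar x.

Local Notation C := (R0 ^ 2 * ((3 * (vmax - v R0) + 2 * (xmax - xmin) / delta) + (vmax - v R0))).

Lemma yn_initial_le_Linf_norm i : (i < Nn n)%nat -> yn L n x i 0 <= R0.
Proof.
  intros Hi. pose proof (elln_le_initial_gap F L R0 xmin n xbar HL HF HR Hxbar i Hi).
  pose proof (gap_pos v vmax L n xbar x Hx i 0 Hi (Rle_refl 0)) as Hgap.
  unfold gap in Hgap. unfold yn. destruct Hx as [Hx0 _]. rewrite !Hx0 in * by lia.
  apply (Rmult_le_reg_r (xbar (S i) - xbar i)); [lra|].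
  replace (elln L n / (xbar (S i) - xbar i) * (xbar (S i) - xbar i)) with (elln L n)
    by (field; lra). lra.
Qed.

Lemma sum_abs_yn_derivative_le_const tau : delta <= tau ->
  sum_upto (fun i => elln L n * Rabs (yn L n x i tau * velocity_gradient v vmax L n x i tau))
    (Nn n) <= C.
Proof.
  intros Htau. pose proof (Nn_pos n).
  pose proof (sum_abs_yn_derivative_le v dv vmax L n xbar x HV1 HV2 HV3 HL Hx R0
                yn_initial_le_Linf_norm tau ltac:(lra)) as Hsum.
  pose proof (spread_growth v dv vmax L n xbar x HV1 HV2 HL Hx R0
                yn_initial_le_Linf_norm tau ltac:(lra)) as Hgrowth.
  pose proof (initial_spread_le F L R0 xmin xmax n xbar HL HF HR Hxbar Hint) as Hspread0.
  destruct Hx as [Hx0 _]. rewrite !Hx0 in Hgrowth by lia.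
  assert (HK : 0 <= vmax - v R0).
  { pose proof (Linf_norm_nonneg F L R0 HF HR).
    pose proof (v_antitone v dv HV1 0 R0 (Rle_refl 0) ltac:(lra)). unfold V2 in HV2. lra. }
  assert (HD : 0 <= xmax - xmin).
  { destruct (cdf_level_in_supp F L R0 HF HR L ltac:(lra)) as [c [Hc _]].
    pose proof (proj1 Hint c Hc). lra. }
  assert (Hbound : 2 / tau * (x (Nn n) tau - x O tau)
                   <= 2 * (xmax - xmin) / delta + 2 * (vmax - v R0)).
  { apply Rle_trans with (2 / tau * ((xmax - xmin) + tau * (vmax - v R0))).
    - apply Rmult_le_compat_l; [apply Rdiv_le_0_compat|]; lra.
    - replace (2 / tau * ((xmax - xmin) + tau * (vmax - v R0)))
        with (2 * (xmax - xmin) / tau + 2 * (vmax - v R0)) by (field; lra).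
      enough (2 * (xmax - xmin) / tau <= 2 * (xmax - xmin) / delta) by lra.
      unfold Rdiv. apply Rmult_le_compat_l; [lra|]. apply Rinv_le_contravar; lra. }
  eapply Rle_trans; [exact Hsum|].
  apply Rmult_le_compat_l; [apply pow2_ge_0 | lra].
Qed.

Lemma sum_abs_yn_increment_le t s : delta <= t -> delta <= s ->
  sum_upto (fun i => elln L n * Rabs (yn L n x i t - yn L n x i s)) (Nn n) <= C * Rabs (t - s).
Proof.
  pose proof (elln_pos L n HL).
  assert (Hordered : forall a b, delta <= a -> a <= b ->
    sum_upto (fun i => elln L n * Rabs (yn L n x i b - yn L n x i a)) (Nn n) <= C * (b - a)).
  { intros a b Ha Hab.
    rewrite (sum_upto_ext _ (fun i => Rabs (elln L n * yn L n x i b - elln L n * yn L n x i a)))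
      by (intros; rewrite <- Rmult_minus_distr_l, Rabs_mult, (Rabs_right (elln L n)); lra).
    apply (sum_upto_abs_increment_le _ (fun i u => elln L n * yn L n x i u)
             (fun i u => elln L n * (- yn L n x i u * velocity_gradient v vmax L n x i u)));
      auto.
    - intros i u Hi Hu. apply (derivable_pt_lim_scal (fun u => yn L n x i u)).
      apply (derivable_yn v vmax L n xbar x Hx); auto; lra.
    - intros u Hu. eapply Rle_trans; [|apply (sum_abs_yn_derivative_le_const u); lra].
      apply Req_le, sum_upto_ext. intros i _.
      rewrite !Rabs_mult, Rabs_Ropp, (Rabs_right (elln L n)) by lra. reflexivity. }
  intros Ht Hs. destruct (Rle_dec s t).
  - rewrite Rabs_right by lra. apply Hordered; auto.
  - rewrite Rabs_left by lra. replace (- (t - s)) with (s - t) by ring.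
    rewrite (sum_upto_ext _ (fun i => elln L n * Rabs (yn L n x i s - yn L n x i t)))
      by (intros; rewrite Rabs_minus_sym; reflexivity).
    apply Hordered; auto; lra.
Qed.

End Estimate.

Theorem proposition3p12
  (v dv : R -> R) (vmax L : R) (F : R -> R) (R0 xmin xmax : R)
  (HV1 : V1 v dv) (HV2 : V2 v vmax) (HV3 : V3 dv)
  (HL : 0 < L) (HF : cdf_ML F L) (HR : is_Linf_norm F R0)
  (Hint : smallest_interval F xmin xmax)
  (delta : R) (Hdelta : 0 < delta)
  (n : nat) (xbar : nat -> R) (Hxbar : initial_points F L xmin n xbar)
  (x : nat -> R -> R) (Hx : ftl_solution v vmax L n xbar x)
  (t s : R) (Ht : delta <= t) (Hs : delta <= s) :
  exists pr : Riemann_integrable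
                (fun z => Rabs (rho_check L n x t z - rho_check L n x s z)) 0 L,
    RiemannInt pr <=
      R0 ^ 2 * ((3 * (vmax - v R0) + 2 * (xmax - xmin) / delta)
                + (vmax - v R0)) * Rabs (t - s).
Proof.
  destruct (RiemannInt_rho_check_distance L n x t s HL) as [pr Hpr].
  exists pr. rewrite Hpr.
  exact (sum_abs_yn_increment_le v dv vmax L F R0 xmin xmax delta n xbar x
           HV1 HV2 HV3 HL HF HR Hint Hdelta Hxbar Hx t s Ht Hs).
Qed.
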